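(* Let $A\in\mathbb{C}^{n\times n}$, $B\in\mathbb{C}^{n\times m}$, $C\in\mathbb{C}^{p\times n}$, and suppose $A^*Z_j=C^*h_j+Z_jH_{-j}$ with $Z_j\in\mathbb{C}^{n\times N}$, $h_j\in\mathbb{C}^{p\times N}$, $H_{-j}\in\mathbb{C}^{N\times N}$ such that $0=H_{-j}+H_{-j}^*-(Z_j^*BB^*Z_j+h_j^*h_j)$; put $R_j=C^*+Z_jh_j^*$ and $X_j=Z_jZ_j^*$. Let $\tilde Z\in\mathbb{C}^{n\times k}$, $U_1\in\mathbb{C}^{p\times k}$, $D\in\mathbb{C}^{k\times k}$, $U_2=h_j^*U_1$ satisfy $A^*\tilde Z=C^*U_1+Z_j(U_2+Z_j^*BB^*\tilde Z)+\tilde ZD$ (e.g. $\tilde Z=(A^*-X_jBB^*-\mu I_n)^{-1}R_j$, $U_1=I_p$, $D=\mu I_p$). Let $Y_{22}\in\mathbb{C}^{k\times k}$ be Hermitian positive definite with $0=Y_{22}D+D^*Y_{22}-\tilde Z^*BB^*\tilde Z-U_1^*U_1$ and Cholesky factorization $Y_{22}=G_{22}^*G_{22}$. Define $Z_{j+1}=\begin{bmatrix}Z_j&\tilde ZG_{22}^{-1}\end{bmatrix}$, $h_{j+1}=\begin{bmatrix}h_j&U_1G_{22}^{-1}\end{bmatrix}$, $H_{-(j+1)}=\begin{bmatrix}H_{-j}&(U_2+Z_j^*BB^*\tilde Z)G_{22}^{-1}\\0&G_{22}DG_{22}^{-1}\end{bmatrix}$. Then $A^*Z_{j+1}=C^*h_{j+1}+Z_{j+1}H_{-(j+1)}$,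 $0=H_{-(j+1)}+H_{-(j+1)}^*-(Z_{j+1}^*BB^*Z_{j+1}+h_{j+1}^*h_{j+1})$, and $R_{j+1}:=C^*+Z_{j+1}h_{j+1}^*=R_j+\tilde ZY_{22}^{-1}U_1^*$ satisfies $\mathcal{R}(Z_{j+1}Z_{j+1}^* )=R_{j+1}R_{j+1}^*$.
   Context: $\mathcal{R}(X)=A^*X+XA+C^*C-XBB^*X$ is the Riccati residual. The hypothesis on $(Z_j,h_j,H_{-j})$ states that the identity matrix solves the small Lyapunov equation $0=\tilde YH_{-j}+H_{-j}^*\tilde Y-(Z_j^*BB^*Z_j+h_j^*h_j)$. *)

(* Complex scalars: an arbitrary numClosedFieldType C
   (e.g. algC, or complex R for R : rcfType), with conjugation Num.conj. *)
From HB Require Import structures.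
From mathcomp Require Import all_boot all_order all_algebra.
Set Implicit Arguments. Unset Strict Implicit. Unset Printing Implicit Defensive.
Import Order.TTheory GRing.Theory Num.Theory.
Local Open Scope ring_scope.

Definition ctmx (F : numClosedFieldType) (m n : nat) (M : 'M[F]_(m, n)) : 'M[F]_(n, m) :=
  (map_mx Num.conj M)^T.

Definition riccati_res (F : numClosedFieldType) (n m p : nat)
  (A : 'M[F]_n) (B : 'M[F]_(n, m)) (C : 'M[F]_(p, n)) (X : 'M[F]_n) : 'M[F]_n :=
  ctmx A *m X + X *m A + ctmx C *m C - X *m B *m ctmx B *m X.

Definition hpd (F : numClosedFieldType) (k : nat) (Y : 'M[F]_k) : Prop :=
  ctmx Y = Y /\
  forall v : 'cV[F]_k, v != 0 -> 0 < (ctmx v *m Y *m v) ord0 ord0.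

(* G is the Cholesky factor of Y : Y = G^* G, G upper triangular with
   positive (real) diagonal entries *)
Definition cholesky_factor (F : numClosedFieldType) (k : nat) (Y G : 'M[F]_k) : Prop :=
  [/\ Y = ctmx G *m G, is_trig_mx G^T & forall i, 0 < G i i].

From HB Require Import structures.
From mathcomp Require Import all_boot all_order all_algebra.
Import Order.TTheory GRing.Theory Num.Theory.
Local Open Scope ring_scope.
Set Implicit Arguments. Unset Strict Implicit. Unset Printing Implicit Defensive.

(* Write M' for the conjugate transpose.  A triple (Z, h, H) is "admissible"
   when it satisfies the Sylvester relation  A' Z = C' h + Z H  and the small
   Lyapunov relation  H + H' = Z' B B' Z + h' h.  The proof has three parts.
   1. For every admissible triple, R(Z Z') = R R' with R = C' + Z h'
      (lemma [riccati_residual_factored]): substitute the Sylvester relation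
      and its adjoint into R(Z Z') and use the Lyapunov relation on the
      middle term Z (H + H') Z'.
   2. Appending the block [Zt G^-1] keeps the triple admissible: the Sylvester
      relation is checked block column by block column
      ([sylvester_extend]); for the Lyapunov relation the off-diagonal blocks
      cancel because U2 = hj' U1, and the diagonal block is the congruence of
      the equation for Y = G' G by G^-1 ([lyapunov_congr], [lyapunov_extend]).
   3. Since Y^-1 = G^-1 (G^-1)' ([cholesky_inv]), the new right factor is
      R_j + Zt Y^-1 U1' ([residual_extend]). *)

Section LowRankRiccati.
Variable F : numClosedFieldType.

Lemma ctmxM m n q (M : 'M[F]_(m, n)) (P : 'M[F]_(n, q)) :
  ctmx (M *m P) = ctmx P *m ctmx M.
Proof. by rewrite /ctmx map_mxM trmx_mul. Qed.

Lemma ctmxK m n (M : 'M[F]_(m, n)) : ctmx (ctmx M) = M.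
Proof. by apply/matrixP=> i j; rewrite !mxE conjCK. Qed.

Lemma ctmxD m n (M P : 'M[F]_(m, n)) : ctmx (M + P) = ctmx M + ctmx P.
Proof. by rewrite /ctmx map_mxD linearD. Qed.

Lemma ctmx0 m n : ctmx (0 : 'M[F]_(m, n)) = 0.
Proof. by rewrite /ctmx map_mx0 trmx0. Qed.

Lemma ctmx1 m : ctmx (1%:M : 'M[F]_m) = 1%:M.
Proof. by rewrite /ctmx map_mx1 trmx1. Qed.

Lemma ctmx_row m n1 n2 (M1 : 'M[F]_(m, n1)) (M2 : 'M[F]_(m, n2)) :
  ctmx (row_mx M1 M2) = col_mx (ctmx M1) (ctmx M2).
Proof. by rewrite /ctmx map_row_mx tr_row_mx. Qed.

Lemma ctmx_block m1 m2 n1 n2 (M11 : 'M[F]_(m1, n1)) (M12 : 'M[F]_(m1, n2))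
    (M21 : 'M[F]_(m2, n1)) (M22 : 'M[F]_(m2, n2)) :
  ctmx (block_mx M11 M12 M21 M22) =
  block_mx (ctmx M11) (ctmx M21) (ctmx M12) (ctmx M22).
Proof. by rewrite /ctmx map_block_mx tr_block_mx. Qed.

Lemma ctmx_invmx_mulV k (G : 'M[F]_k) :
  G \in unitmx -> ctmx (invmx G) *m ctmx G = 1%:M.
Proof. by move=> Gu; rewrite -ctmxM mulmxV // ctmx1. Qed.

(* A Cholesky factor is triangular with positive diagonal, hence invertible. *)
Lemma cholesky_unit k (Y G : 'M[F]_k) : cholesky_factor Y G -> G \in unitmx.
Proof.
case=> _ trigG posG; rewrite unitmxE -det_tr det_trig // unitfE.
rewrite (eq_bigr (fun i => G i i)); last by move=> i _; rewrite mxE.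
by rewrite prodf_seq_neq0; apply/allP=> i _; rewrite /= lt0r_neq0.
Qed.

Lemma cholesky_inv k (Y G : 'M[F]_k) :
  G \in unitmx -> Y = ctmx G *m G -> invmx Y = invmx G *m ctmx (invmx G).
Proof.
move=> Gu eY.
have YX : Y *m (invmx G *m ctmx (invmx G)) = 1%:M.
  by rewrite eY mulmxA mulmxK // -ctmxM mulVmx // ctmx1.
have [Yu _] := mulmx1_unit YX.
by rewrite -[RHS](mulKmx Yu) YX mulmx1.
Qed.

Lemma lyapunov_sum N (H K : 'M[F]_N) : 0 = H + ctmx H - K -> H + ctmx H = K.
Proof. by move/eqP; rewrite eq_sym subr_eq0 => /eqP. Qed.

Variables (n m p : nat) (A : 'M[F]_n) (B : 'M[F]_(n, m)) (C : 'M[F]_(p, n)).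

Lemma riccati_residual_factored N (Z : 'M[F]_(n, N)) (h : 'M[F]_(p, N))
    (H : 'M[F]_N) :
  ctmx A *m Z = ctmx C *m h + Z *m H ->
  0 = H + ctmx H - (ctmx Z *m B *m ctmx B *m Z + ctmx h *m h) ->
  riccati_res A B C (Z *m ctmx Z) =
  (ctmx C + Z *m ctmx h) *m ctmx (ctmx C + Z *m ctmx h).
Proof.
move=> syl /lyapunov_sum lyap.
have sylT : ctmx Z *m A = ctmx h *m C + ctmx H *m ctmx Z.
  by rewrite -[A]ctmxK -ctmxM syl ctmxD !ctmxM !ctmxK.
have middle : Z *m H *m ctmx Z + Z *m ctmx H *m ctmx Z =
    Z *m ctmx Z *m B *m ctmx B *m Z *m ctmx Z + Z *m ctmx h *m h *m ctmx Z.
  by rewrite -mulmxDl -mulmxDr lyap mulmxDr mulmxDl !mulmxA.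
rewrite /riccati_res mulmxA syl -mulmxA sylT ctmxD !ctmxM !ctmxK.
rewrite !(mulmxDl, mulmxDr) !mulmxA addrACA middle.
rewrite [_ + Z *m ctmx h *m h *m ctmx Z]addrC !addrA.
by rewrite (addrAC _ _ (ctmx C *m C)) addrK [LHS]addrC !addrA.
Qed.

Variables (N k : nat) (Zj : 'M[F]_(n, N)) (hj : 'M[F]_(p, N)) (Hj : 'M[F]_N).
Variables (Zt : 'M[F]_(n, k)) (U1 : 'M[F]_(p, k)) (D G : 'M[F]_k).
Hypothesis G_unit : G \in unitmx.

Lemma sylvester_extend (W : 'M[F]_(N, k)) :
  ctmx A *m Zj = ctmx C *m hj + Zj *m Hj ->
  ctmx A *m Zt = ctmx C *m U1 + Zj *m W + Zt *m D ->
  ctmx A *m row_mx Zj (Zt *m invmx G) =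
  ctmx C *m row_mx hj (U1 *m invmx G) +
  row_mx Zj (Zt *m invmx G) *m block_mx Hj (W *m invmx G) 0 (G *m D *m invmx G).
Proof.
move=> sylj sylt.
rewrite mul_mx_row mul_row_block mul_mx_row add_row_mx mulmx0 addr0 sylj.
congr row_mx; rewrite mulmxA sylt !mulmxDl !mulmxA mulmxKV //.
by rewrite -!addrA.
Qed.

(* Part 2b: the congruence by G^-1 turns the Lyapunov equation for Y = G' G
   into the Lyapunov relation of the new diagonal block. *)
Lemma lyapunov_congr (Y : 'M[F]_k) :
  Y = ctmx G *m G ->
  0 = Y *m D + ctmx D *m Y - ctmx Zt *m B *m ctmx B *m Zt - ctmx U1 *m U1 ->
  0 = G *m D *m invmx G + ctmx (G *m D *m invmx G) -
      (ctmx (Zt *m invmx G) *m B *m ctmx B *m (Zt *m invmx G) +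
       ctmx (U1 *m invmx G) *m (U1 *m invmx G)).
Proof.
move=> eY lyapY.
have := congr1 (fun M => ctmx (invmx G) *m M *m invmx G) lyapY.
rewrite /= mulmx0 mul0mx eY => ->.
rewrite !(mulmxDr, mulmxBr, mulmxDl, mulmxBl) !ctmxM ?ctmxK !mulmxA.
rewrite ctmx_invmx_mulV // mul1mx mulmxK //.
by rewrite !mulmxN !mulNmx !mulmxA opprD addrA.
Qed.

(* Part 2c: the small Lyapunov relation for the extended triple; the
   off-diagonal blocks vanish because of the choice U2 = hj' U1. *)
Lemma lyapunov_extend (Y : 'M[F]_k) :
  0 = Hj + ctmx Hj - (ctmx Zj *m B *m ctmx B *m Zj + ctmx hj *m hj) ->
  Y = ctmx G *m G ->
  0 = Y *m D + ctmx D *m Y - ctmx Zt *m B *m ctmx B *m Zt - ctmx U1 *m U1 ->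
  let W := ctmx hj *m U1 + ctmx Zj *m B *m ctmx B *m Zt in
  let Z1 := row_mx Zj (Zt *m invmx G) in
  let h1 := row_mx hj (U1 *m invmx G) in
  let H1 := block_mx Hj (W *m invmx G) 0 (G *m D *m invmx G) in
  0 = H1 + ctmx H1 - (ctmx Z1 *m B *m ctmx B *m Z1 + ctmx h1 *m h1).
Proof.
move=> lyapj eY lyapY W Z1 h1 H1.
rewrite /H1 /Z1 /h1 ctmx_block !ctmx_row mul_col_mx mul_col_mx mul_col_row mul_col_row.
rewrite !add_block_mx opp_block_mx add_block_mx -block_mx0.
congr block_mx.
- exact: lyapj.
- by rewrite ctmx0 addr0 /W !mulmxA -mulmxDl [_ + ctmx hj *m U1]addrC subrr.
- rewrite add0r /W !ctmxM ctmxD !ctmxM !ctmxK !mulmxDr !mulmxA.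
  by rewrite [X in _ - X]addrC subrr.
- exact: (lyapunov_congr eY lyapY).
Qed.

Lemma residual_extend (Y : 'M[F]_k) :
  Y = ctmx G *m G ->
  ctmx C + row_mx Zj (Zt *m invmx G) *m ctmx (row_mx hj (U1 *m invmx G)) =
  ctmx C + Zj *m ctmx hj + Zt *m invmx Y *m ctmx U1.
Proof.
move=> eY.
by rewrite ctmx_row mul_row_col addrA (cholesky_inv G_unit eY) ctmxM !mulmxA.
Qed.

End LowRankRiccati.

(* The main theorem: the new iterate is admissible and its residual factor is
   the rank-k update of Rj.  Positive definiteness of Y22 enters only through
   its Cholesky factorization. *)
Theorem mainTheorem11 (F : numClosedFieldType) (n m p N k : nat)
  (A : 'M[F]_n) (B : 'M[F]_(n, m)) (C : 'M[F]_(p, n))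
  (Zj : 'M[F]_(n, N)) (hj : 'M[F]_(p, N)) (Hj : 'M[F]_N)
  (Zt : 'M[F]_(n, k)) (U1 : 'M[F]_(p, k)) (D : 'M[F]_k)
  (Y22 G22 : 'M[F]_k) :
  ctmx A *m Zj = ctmx C *m hj + Zj *m Hj ->
  0 = Hj + ctmx Hj - (ctmx Zj *m B *m ctmx B *m Zj + ctmx hj *m hj) ->
  let Rj := ctmx C + Zj *m ctmx hj in
  let U2 := ctmx hj *m U1 in
  ctmx A *m Zt = ctmx C *m U1 + Zj *m (U2 + ctmx Zj *m B *m ctmx B *m Zt) + Zt *m D ->
  hpd Y22 ->
  0 = Y22 *m D + ctmx D *m Y22 - ctmx Zt *m B *m ctmx B *m Zt - ctmx U1 *m U1 ->
  cholesky_factor Y22 G22 ->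
  let Zj1 : 'M[F]_(n, N + k) := row_mx Zj (Zt *m invmx G22) in
  let hj1 : 'M[F]_(p, N + k) := row_mx hj (U1 *m invmx G22) in
  let Hj1 : 'M[F]_(N + k) :=
    block_mx Hj ((U2 + ctmx Zj *m B *m ctmx B *m Zt) *m invmx G22)
             0 (G22 *m D *m invmx G22) in
  let Rj1 := ctmx C + Zj1 *m ctmx hj1 in
  [/\ ctmx A *m Zj1 = ctmx C *m hj1 + Zj1 *m Hj1,
      0 = Hj1 + ctmx Hj1 - (ctmx Zj1 *m B *m ctmx B *m Zj1 + ctmx hj1 *m hj1),
      Rj1 = Rj + Zt *m invmx Y22 *m ctmx U1
    & riccati_res A B C (Zj1 *m ctmx Zj1) = Rj1 *m ctmx Rj1].
Proof.
move=> sylj lyapj Rj U2 sylt _ lyapY chol Zj1 hj1 Hj1 Rj1.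
have Gu := cholesky_unit chol.
have [eY _ _] := chol.
have syl1 := sylvester_extend Gu sylj sylt.
have lyap1 := lyapunov_extend Gu lyapj eY lyapY.
split=> //; first exact: residual_extend.
exact: riccati_residual_factored syl1 lyap1.
Qed.
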